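(* Let $R_X\subseteq U_X$ be given and let $\nu,\gamma,G_X,B_X,\sigma^2$ be defined from $(f,\mathcal{T},R_X)$ as in the context. Define $B_\eta:=\min\{\sigma^2,\,1-\nu^2\}$. Let $\eta\in(0,B_\eta)$, put $\tau:=\sqrt{1-\eta}$, and let $$R'_X:=\{x\in U_X:\ \Pr_{h\sim\mathcal{T}}[h(x)=f(x)]<\tau\}.$$ Then: (i) $|R'_X\cap(U_X\setminus W_X)|\le \frac{\nu}{1-\tau}\,|U_X\setminus W_X|$; (ii) $\left(1-\frac{\gamma}{\tau}\right)|R_X|\le |R_X\cap R'_X|$; (iii) $G_X\subseteq R'_X$; (iv) $|R'_X\cap B_X|\ge \frac{\sigma^2-\eta}{1-\eta}\,|B_X|$.
   Context: Setting. $\mathcal{X}$ is an input set and $\mathcal{Y}$ a finite set of labels. $U$ is a finite nonempty set of labeled test points $(x,y_x)$ with $x\in\mathcal{X}$, $y_x\in\mathcal{Y}$ and distinct inputs; $U_X$ is its set of inputs. All probabilities and expectations over $x$ (or $(x,y_x)$) are with respect to the uniform distribution on $U$ (or on the indicated subset when conditioning). $f:\mathcal{X}\to\mathcal{Y}$ is a fixed classifier. $\mathcal{T}$ is a probability distribution on a set of classifiers $h:\mathcal{X}\to\mathcal{Y}$ (an ensemble); $h\sim\mathcal{T}$ is drawn independently of $x$. $W_X:=\{x\in U_X: f(x)\neq y_x\}$ is the set of misclassified points, $e_f:=|W_X|/|U_X|$ and $\mathrm{acc}(f):=1-e_f$. For $x\in U_X$ the diversity is $\sigma_x^2:=1-\sum_{y\in\mathcal{Y}}\big(\Pr_{h\sim\mathcal{T}}[h(x)=y]\big)^2=1-\Pr_{h_1,h_2\sim\mathcal{T}\text{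 i.i.d.}}[h_1(x)=h_2(x)]$. Quantities relative to a set $R_X\subseteq U_X$: $\nu:=\Pr_{(x,y_x)\sim U,\,h\sim\mathcal{T}}[h(x)\neq y_x\mid f(x)=y_x]$ (set $\nu:=0$ if $U_X\setminus W_X=\emptyset$); $\gamma:=\Pr_{x\sim R_X,\,h\sim\mathcal{T}}[h(x)=f(x)]$ with $x$ uniform on $R_X$ (set $\gamma:=0$ if $R_X=\emptyset$); $G_X:=\{x\in W_X\setminus R_X:\ \Pr_{h\sim\mathcal{T}}[h(x)=y_x]\ge 1-\nu\}$; $B_X:=W_X\setminus(R_X\cup G_X)$; $\sigma^2:=\mathbb{E}[\sigma_x^2\mid x\in B_X]$, the average of $\sigma_x^2$ over $B_X$ (set $\sigma^2:=1$ if $B_X=\emptyset$). *)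

From mathcomp Require Import all_boot all_order all_algebra.
Set Implicit Arguments. Unset Strict Implicit. Unset Printing Implicit Defensive.
Import Order.TTheory GRing.Theory Num.Theory.
Local Open Scope ring_scope.

(* Setting:
   - X : input type (eqType), Y : finite label type.
   - UX : seq X, the (duplicate-free, nonempty) list of test inputs; lab x = y_x.
   - The ensemble T is a finite weighted family of classifiers:
     index type H : finType, weights w : H -> R (nonnegative, summing to 1),
     clf : H -> X -> Y.  Pr_{h~T}[P h] = \sum_(i | P (clf i)) w i.
   - Uniform distributions over finite sets of inputs are averages over UX. *)

Section Defs.
Variables (R : rcfType) (X : eqType) (Y : finType) (H : finType).
Variables (w : H -> R) (clf : H -> X -> Y).
Variables (UX : seq X) (lab : X -> Y) (f : X -> Y) (RX : pred X).

Definition pAgree (x : X) (y : Y) : R := \sum_(i | clf i x == y) w i.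

Definition pDisagree (x : X) (y : Y) : R := \sum_(i | clf i x != y) w i.

Definition diversity (x : X) : R := 1 - \sum_(y : Y) (pAgree x y) ^+ 2.

Definition misclassified (x : X) : bool := (x \in UX) && (f x != lab x).
Definition correct (x : X) : bool := (x \in UX) && (f x == lab x).

(* nu = Pr_{x~U, h~T}[h(x) <> y_x | f(x) = y_x], 0 if no correct point *)
Definition nu : R :=
  if count correct UX == 0%N then 0
  else (\sum_(x <- UX | correct x) pDisagree x (lab x))
       / (count correct UX)%:R.

(* gamma = Pr_{x ~ R_X, h ~ T}[h(x) = f(x)], 0 if R_X empty *)
Definition gamma : R :=
  if count RX UX == 0%N then 0
  else (\sum_(x <- UX | RX x) pAgree x (f x)) / (count RX UX)%:R.

Definition GX (x : X) : bool :=
  [&& misclassified x, ~~ RX x & 1 - nu <= pAgree x (lab x)].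

Definition BX (x : X) : bool :=
  [&& misclassified x, ~~ RX x & ~~ GX x].

(* sigma^2 = E[sigma_x^2 | x in B_X], 1 if B_X empty *)
Definition sigma2 : R :=
  if count BX UX == 0%N then 1
  else (\sum_(x <- UX | BX x) diversity x) / (count BX UX)%:R.

Definition Beta : R := Num.min sigma2 (1 - nu ^+ 2).

Definition RXprime (tau : R) (x : X) : bool :=
  (x \in UX) && (pAgree x (f x) < tau).

End Defs.

From mathcomp Require Import all_boot all_order all_algebra.
From mathcomp Require Import ring lra.
Import Order.TTheory GRing.Theory Num.Theory.
Set Implicit Arguments. Unset Strict Implicit. Unset Printing Implicit Defensive.
Local Open Scope ring_scope.

(* All four claims are pointwise threshold arguments summed
   over a finite set of test points, with tau = sqrt (1 - eta):
   (i)   Markov: a correct point of R'_X has disagreement > 1 - tau, and the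
         average disagreement over correct points is nu;
   (ii)  Markov again: a point of R_X outside R'_X has agreement >= tau, and
         the average agreement over R_X is gamma;
   (iii) on G_X the agreement with the true label is >= 1 - nu, hence the
         agreement with the (different) label f(x) is <= nu < tau;
   (iv)  a point of B_X outside R'_X has agreement >= tau with f(x), so its
         diversity is <= 1 - tau^2 = eta, while any diversity is <= 1.
   The file first turns sums of threshold indicators into counts, then
   records the elementary facts about the ensemble probabilities, proves
   each claim under the minimal hypotheses on tau, and finally checks that
   eta < B_eta gives tau those properties (nu < tau < 1, tau^2 = 1 - eta);
   of the bound B_eta only the part eta < 1 - nu^2 is actually needed. *)

Lemma sum_if_count (R : numDomainType) (X : eqType) (s : seq X)
    (P Q : pred X) (a b : R) :
  \sum_(x <- s | P x) (if Q x then a else b)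
    = a * (count (fun x => P x && Q x) s)%:R
      + b * (count (fun x => P x && ~~ Q x) s)%:R.
Proof.
elim: s => [|x s IH]; first by rewrite big_nil !mulr0 addr0.
rewrite big_cons IH /=; case: (P x); case: (Q x); rewrite /= ?natrS; ring.
Qed.

Lemma markov_count (R : numDomainType) (X : eqType) (s : seq X)
    (P Q : pred X) (g : X -> R) (a : R) :
  (forall x, P x -> 0 <= g x) -> (forall x, P x -> Q x -> a <= g x) ->
  a * (count (fun x => P x && Q x) s)%:R <= \sum_(x <- s | P x) g x.
Proof.
move=> g_ge0 g_ge_a.
rewrite -[leLHS]addr0 -[X in _ + X](mul0r (count (fun x => P x && ~~ Q x) s)%:R).
rewrite -sum_if_count; apply: ler_sum => x Px.
by case: ifP => [/(g_ge_a x Px) | _]; last exact: g_ge0.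
Qed.

Lemma count_split (X : eqType) (s : seq X) (P Q : pred X) :
  count P s = (count (fun x => P x && Q x) s + count (fun x => P x && ~~ Q x) s)%N.
Proof. by elim: s => //= x s ->; case: (P x); case: (Q x); rewrite /= ?addnS. Qed.

Lemma sqrt_threshold (R : rcfType) (nu eta : R) :
  0 <= nu -> 0 < eta -> eta < 1 - nu ^+ 2 ->
  let tau := Num.sqrt (1 - eta) in
  [/\ 0 < tau, tau < 1, tau ^+ 2 = 1 - eta & nu < tau].
Proof.
move=> nu_ge0 eta_gt0 eta_lt tau.
have nu_sq := sqr_ge0 nu.
have tau_sq : tau ^+ 2 = 1 - eta by apply: sqr_sqrtr; lra.
have tau_gt0 : 0 < tau by rewrite sqrtr_gt0; lra.
split=> //; nra.
Qed.

Section Ensemble.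
Variables (R : rcfType) (X : eqType) (Y : finType) (H : finType).
Variables (w : H -> R) (clf : H -> X -> Y).
Hypothesis w_ge0 : forall i, 0 <= w i.
Hypothesis w_sum1 : \sum_i w i = 1.

Lemma pAgree_ge0 x y : 0 <= pAgree w clf x y.
Proof. exact: sumr_ge0. Qed.

Lemma pDisagree_ge0 x y : 0 <= pDisagree w clf x y.
Proof. exact: sumr_ge0. Qed.

Lemma pAgree_pDisagree x y : pAgree w clf x y + pDisagree w clf x y = 1.
Proof. by rewrite -w_sum1 (bigID (fun i => clf i x == y)). Qed.

Lemma pAgree_le_pDisagree x y y' :
  y != y' -> pAgree w clf x y <= pDisagree w clf x y'.
Proof.
move=> neq_yy'; rewrite /pAgree /pDisagree [X in X <= _]big_mkcond [X in _ <= X]big_mkcond /=.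
apply: ler_sum => i _; case: eqP => [->|_]; first by rewrite neq_yy'.
by case: ifP.
Qed.

Lemma diversity_le x y : diversity w clf x <= 1 - pAgree w clf x y ^+ 2.
Proof.
rewrite lerD2l lerN2 (bigD1 y) //= lerDl.
by apply: sumr_ge0 => z _; apply: sqr_ge0.
Qed.

Lemma diversity_le1 x : diversity w clf x <= 1.
Proof. by rewrite gerDl oppr_le0; apply: sumr_ge0 => z _; apply: sqr_ge0. Qed.

Lemma nu_ge0 UX lab f : 0 <= nu w clf UX lab f.
Proof.
rewrite /nu; case: ifP => // _.
by apply: divr_ge0; [apply: sumr_ge0 => x _; apply: pDisagree_ge0 | apply: ler0n].
Qed.

Section Claims.
Variables (UX : seq X) (lab : X -> Y) (f : X -> Y) (RX : pred X) (tau : R).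

Let R' := RXprime w clf UX f tau.

(* Claim (i): few correctly classified points fall in R'_X.  A correct
   point of R'_X disagrees with its label with probability > 1 - tau. *)
Lemma correct_in_RXprime : tau < 1 ->
  (count (fun x => R' x && correct UX lab f x) UX)%:R
    <= nu w clf UX lab f / (1 - tau) * (count (correct UX lab f) UX)%:R.
Proof.
move=> tau_lt1; rewrite /nu; case: eqP => [no_correct | /eqP some_correct].
  have sub_correct : subpred (fun x => R' x && correct UX lab f x) (correct UX lab f)
    by move=> x /andP[].
  by have := sub_count sub_correct UX; rewrite no_correct mulr0 leqn0 => /eqP ->.
set S := \sum_(x <- UX | _) _; set n := (count (correct UX lab f) UX)%:R.
have n_gt0 : 0 < n by rewrite ltr0n lt0n.
have markov : (1 - tau) * (count (fun x => correct UX lab f x && R' x) UX)%:R <= S.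
  apply: markov_count => [x _ | x /andP[xU /eqP f_lab]]; first exact: pDisagree_ge0.
  rewrite /R' /RXprime xU -f_lab /= => agree_lt.
  by have := pAgree_pDisagree x (f x); lra.
rewrite (_ : S / n / (1 - tau) * n = S / (1 - tau)); last first.
  by field; rewrite !gt_eqF ?subr_gt0.
rewrite ler_pdivlMr ?subr_gt0 // mulrC.
by rewrite (eq_count (a2 := fun x => correct UX lab f x && R' x)) // => x; rewrite andbC.
Qed.

(* Claim (ii): most points of R_X fall in R'_X.  A point of R_X outside R'_X
   agrees with f with probability >= tau. *)
Lemma RX_in_RXprime : {subset RX <= UX} -> 0 < tau ->
  (1 - gamma w clf UX f RX / tau) * (count RX UX)%:R
    <= (count (fun x => RX x && R' x) UX)%:R.
Proof.
move=> sub_RX tau_gt0; rewrite /gamma; case: eqP => [-> | /eqP some_RX].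
  by rewrite mulr0 ler0n.
set S := \sum_(x <- UX | RX x) _; set n := (count RX UX)%:R.
have n_gt0 : 0 < n by rewrite ltr0n lt0n.
have markov : tau * (count (fun x => RX x && ~~ R' x) UX)%:R <= S.
  apply: markov_count => [x _ | x RXx]; first exact: pAgree_ge0.
  by rewrite /R' /RXprime (sub_RX x RXx) /= -leNgt.
rewrite (_ : (1 - S / n / tau) * n = n - S / tau); last by field; rewrite !gt_eqF.
move: markov; rewrite -ler_pdivlMl // /n (count_split UX RX R') natrD.
lra.
Qed.

(* Claim (iii): G_X is contained in R'_X.  On G_X the agreement with the
   true label is >= 1 - nu, so the agreement with the different label f(x)
   is <= nu < tau. *)
Lemma GX_sub_RXprime : nu w clf UX lab f < tau ->
  {subset GX w clf UX lab f RX <= R'}.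
Proof.
move=> nu_lt_tau x /and3P[/andP[xU f_neq_lab] _ good].
rewrite unfold_in /R' /RXprime xU /=.
have := pAgree_le_pDisagree x f_neq_lab; have := pAgree_pDisagree x (lab x).
move: good; lra.
Qed.

(* Claim (iv): a large part of B_X falls in R'_X, since outside R'_X the
   diversity is at most 1 - tau^2 = eta. *)
Lemma BX_in_RXprime (eta : R) : 0 <= tau -> tau ^+ 2 = 1 - eta -> eta < 1 ->
  (sigma2 w clf UX lab f RX - eta) / (1 - eta)
      * (count (BX w clf UX lab f RX) UX)%:R
    <= (count (fun x => R' x && BX w clf UX lab f RX x) UX)%:R.
Proof.
move=> tau_ge0 tau_sq eta_lt1; set B := BX w clf UX lab f RX.
rewrite /sigma2 -/B; case: eqP => [-> | /eqP some_B]; first by rewrite mulr0 ler0n.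
set S := \sum_(x <- UX | B x) _.
have diversity_bound :
    S <= 1 * (count (fun x => B x && R' x) UX)%:R
         + eta * (count (fun x => B x && ~~ R' x) UX)%:R.
  rewrite -sum_if_count; apply: ler_sum => x /and3P[/andP[xU _] _ _].
  rewrite /R' /RXprime xU /=; case: ltP => [_|agree_ge]; first exact: diversity_le1.
  apply: le_trans (diversity_le x (f x)) _.
  have : tau * tau <= pAgree w clf x (f x) * pAgree w clf x (f x) by apply: ler_pM.
  rewrite -!expr2; lra.
rewrite (eq_count (a1 := fun x => R' x && B x) (a2 := fun x => B x && R' x));
  last by move=> x; rewrite andbC.
set n := (count B UX)%:R; have n_pos : 0 < n by rewrite ltr0n lt0n.
rewrite (_ : (S / n - eta) / (1 - eta) * n = (S - eta * n) / (1 - eta)); last first.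
  by field; rewrite gt_eqF ?subr_gt0 // gt_eqF.
rewrite ler_pdivrMr ?subr_gt0 // /n (count_split UX B R') natrD.
move: diversity_bound; nra.
Qed.

End Claims.
End Ensemble.

Theorem mainTheorem1 (R : rcfType) (X : eqType) (Y : finType) (H : finType)
    (w : H -> R) (clf : H -> X -> Y)
    (UX : seq X) (lab : X -> Y) (f : X -> Y) (RX : pred X) (eta : R) :
  (forall i, 0 <= w i) -> \sum_i w i = 1 ->
  uniq UX -> UX != [::] ->
  {subset RX <= UX} ->
  0 < eta -> eta < Beta w clf UX lab f RX ->
  let tau := Num.sqrt (1 - eta) in
  let R' := RXprime w clf UX f tau in
  let nuv := nu w clf UX lab f in
  let gam := gamma w clf UX f RX in
  let s2 := sigma2 w clf UX lab f RX in
  let G := GX w clf UX lab f RX in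
  let B := BX w clf UX lab f RX in
  [/\ (count (fun x => R' x && correct UX lab f x) UX)%:R
        <= nuv / (1 - tau) * (count (correct UX lab f) UX)%:R,
      (1 - gam / tau) * (count RX UX)%:R
        <= (count (fun x => RX x && R' x) UX)%:R,
      {subset G <= R'} &
      (count (fun x => R' x && B x) UX)%:R
        >= (s2 - eta) / (1 - eta) * (count B UX)%:R].
Proof.
move=> w_ge0 w_sum1 _ _ sub_RX eta_gt0 eta_lt_Beta tau R' nuv gam s2 G B.
move: eta_lt_Beta; rewrite /Beta lt_min => /andP[_ eta_lt].
have [tau_gt0 tau_lt1 tau_sq nu_lt_tau] :=
  sqrt_threshold (nu_ge0 clf w_ge0 UX lab f) eta_gt0 eta_lt.
split.
- exact: correct_in_RXprime.
- exact: RX_in_RXprime.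
- exact: GX_sub_RXprime.
- by apply: BX_in_RXprime => //; [apply: ltW | rewrite -subr_gt0 -tau_sq exprn_gt0].
Qed.
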